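(* Let $\mathcal D=(A,D)$ be a dependence alphabet and suppose there are letters $a,b,c,d\in A$ with $a\neq b$, $(a,b)\in D$, and $c\parallel d$. Then there exist an lc-rational relation $\mathcal R\subseteq\mathbb M(\mathcal D)^2$, a rational set $\mathcal K\subseteq\mathbb M(\mathcal D)$ and a recognizable set $\mathcal L\subseteq\mathbb M(\mathcal D)$ such that ${}^{\mathcal R}\mathcal K$ is not rational and $\mathcal L^{\mathcal R}$ is not recognizable.
   Context: A dependence alphabet is $\mathcal D=(A,D)$, $A$ finite, $D\subseteq A\times A$ reflexive and symmetric; letters $x,y$ are independent if $(x,y)\notin D$, and $c\parallel d$ means $c,d$ are independent. $\sim$ is the least congruence on $A^*$ with $xy\sim yx$ for independent $x,y$; $\mathbb M(\mathcal D)=A^*/{\sim}$, $[w]$ the class of $w$, $[L]=\{[u]\mid u\in L\}$, $[R]=\{([u],[v])\mid(u,v)\in R\}$. A trace language $\mathcal K$ is recognizable if $\{u\mid[u]\in\mathcal K\}$ is regular, rational if $\mathcal K=[L]$ for a regular $L$. A word relation $R$ is left-closed if $u\sim u'$, $(u',v')\in R$ imply some $v$ with $(u,v)\in R$, $v\sim v'$; a trace relation is lc-rational if it equals $[R]$ for a left-closed rational word relation $R$. $\mathcal L^{\mathcal R}=\{y\mid\exists x\in\mathcal L:(x,y)\in\mathcal R\}$ and ${}^{\mathcal R}\mathcal L=\{x\mid\exists y\in\mathcal L:(x,y)\in\mathcal R\}$. *)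

From mathcomp Require Import all_boot.
From Stdlib Require List.
Set Implicit Arguments. Unset Strict Implicit. Unset Printing Implicit Defensive.

Definition regular (A : finType) (L : seq A -> Prop) : Prop :=
  exists (Q : finType) (q0 : Q) (delta : Q -> A -> Q) (F : pred Q),
    forall w, L w <-> F (foldl delta q0 w).

Inductive rexp (A : Type) : Type :=
| REmpty
| RSing of seq A & seq A
| RUnion of rexp A & rexp A
| RCat of rexp A & rexp A
| RStar of rexp A.

Fixpoint rsem (A : Type) (e : rexp A) : seq A -> seq A -> Prop :=
  match e with
  | REmpty => fun _ _ => False
  | RSing u v => fun x y => x = u /\ y = v
  | RUnion e1 e2 => fun x y => rsem e1 x y \/ rsem e2 x y
  | RCat e1 e2 => fun x y => exists x1 x2 y1 y2,
      [/\ rsem e1 x1 y1, rsem e2 x2 y2, x = x1 ++ x2 & y = y1 ++ y2]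
  | RStar e1 => fun x y => exists s : seq (seq A * seq A),
      (forall p, List.In p s -> rsem e1 p.1 p.2) /\
      x = flatten (map fst s) /\ y = flatten (map snd s)
  end.

Definition rational_rel (A : Type) (R : seq A -> seq A -> Prop) : Prop :=
  exists e : rexp A, forall u v, R u v <-> rsem e u v.

Section Traces.
Variables (A : finType) (D : rel A).

Inductive tequiv : seq A -> seq A -> Prop :=
| teq_refl u : tequiv u u
| teq_sym u v : tequiv u v -> tequiv v u
| teq_trans u v w : tequiv u v -> tequiv v w -> tequiv u w
| teq_cat u u' v v' : tequiv u u' -> tequiv v v' -> tequiv (u ++ v) (u' ++ v')
| teq_swap x y : ~~ D x y -> tequiv [:: x; y] [:: y; x].

Definition trace : Type := {C : seq A -> Prop | exists w, C = tequiv w}.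

Definition tclass (w : seq A) : trace :=
  exist (fun C => exists w, C = tequiv w) (tequiv w) (ex_intro _ w erefl).

Definition trace_recognizable (K : trace -> Prop) : Prop :=
  regular (fun u => K (tclass u)).

Definition trace_rational (K : trace -> Prop) : Prop :=
  exists L : seq A -> Prop, regular L /\
    forall t, K t <-> exists u, L u /\ t = tclass u.

Definition left_closed (R : seq A -> seq A -> Prop) : Prop :=
  forall u u' v', tequiv u u' -> R u' v' -> exists v, R u v /\ tequiv v v'.

Definition lc_rational (TR : trace -> trace -> Prop) : Prop :=
  exists R : seq A -> seq A -> Prop, rational_rel R /\ left_closed R /\
    forall s t, TR s t <-> exists u v, [/\ R u v, s = tclass u & t = tclass v].

Definition rel_image (L : trace -> Prop) (TR : trace -> trace -> Prop) :
  trace -> Prop := fun y => exists x, L x /\ TR x y.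
Definition rel_preimage (TR : trace -> trace -> Prop) (L : trace -> Prop) :
  trace -> Prop := fun x => exists y, L y /\ TR x y.

End Traces.

From mathcomp Require Import all_boot.
From Stdlib Require Import ProofIrrelevance FunctionalExtensionality.
From Stdlib Require Import PropExtensionality.
Set Implicit Arguments. Unset Strict Implicit. Unset Printing Implicit Defensive.

(* Take R = {(a^n, (cd)^n)} U {(b a^n b^m, c^n d^m)}, K = [(cd)^*] and
   L = [a^*].  As a and b are dependent, a word over {a, b} is the only word
   of its trace; hence R is left-closed, and a rational set of such traces is
   recognizable.  As c and d commute, [(cd)^n] = [c^n d^n], so that
   ^R K = [a^*] U {[b a^n b^n]} and L^R = {[c^n d^n]}, and a pigeonhole
   argument on the states of an automaton reading b a^n, resp. c^n, shows that
   neither set is recognizable. *)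

Lemma pigeonhole_nat (Q : finType) (f : nat -> Q) :
  exists m n, m != n /\ f m = f n.
Proof.
pose g (i : 'I_#|Q|.+1) := f i.
have /injectivePn[i [j ij gij]] : ~~ injectiveb g.
  by apply/injectiveP => /leq_card; rewrite card_ord ltnn.
by exists (i : nat), (j : nat).
Qed.

Section Regular.
Variable A : finType.

Lemma regular_ext (L1 L2 : seq A -> Prop) :
  (forall w, L1 w <-> L2 w) -> regular L1 -> regular L2.
Proof.
move=> L12 [Q [q0 [delta [F L1F]]]].
by exists Q, q0, delta, F => w; rewrite -L12.
Qed.

Lemma regular_all (P : pred A) : regular (fun w => all P w).
Proof.
exists bool, true, (fun q x => q && P x), id => w /=.
suff -> : forall q, foldl (fun q x => q && P x) q w = q && all P w by [].
by elim: w => [|x w IHw] q /=; rewrite ?andbT // IHw andbA.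
Qed.

Lemma regular_collision (L : seq A -> Prop) (p s : nat -> seq A) :
  regular L -> (forall n, L (p n ++ s n)) ->
  exists m n, m != n /\ L (p m ++ s n).
Proof.
move=> [Q [q0 [delta [F LF]]]] Lps.
have [n [m [nm Epnm]]] := pigeonhole_nat (fun n => foldl delta q0 (p n)).
exists m, n; split; first by rewrite eq_sym.
by apply/LF; rewrite foldl_cat -Epnm -foldl_cat; apply/LF.
Qed.

End Regular.

Lemma rsem_star_sing (A : Type) (x y u v : seq A) :
  rsem (RStar (RSing x y)) u v <->
  exists n, u = flatten (nseq n x) /\ v = flatten (nseq n y).
Proof.
split.
- case=> s [Hs [-> ->]]; exists (size s).
  suff [-> ->] : map fst s = nseq (size s) x /\ map snd s = nseq (size s) y.
    by [].
  elim: s Hs => [|[x' y'] s IHs] Hs //=.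
  have [/= -> ->] := Hs _ (or_introl erefl).
  by have [-> ->] := IHs (fun q sq => Hs q (or_intror sq)).
- case=> n [-> ->]; exists (nseq n (x, y)); split; last by rewrite !map_nseq.
  by move=> q; elim: n => [|n IHn] //= [<-|/IHn].
Qed.

Lemma flatten_nseq1 (A : Type) (x : A) n : flatten (nseq n [:: x]) = nseq n x.
Proof. by elim: n => //= n ->. Qed.

Section Traces.
Variables (A : finType) (D : rel A).

Lemma tclass_eq u v : tequiv D u v -> tclass D u = tclass D v.
Proof.
move=> uv; apply: subset_eq_compat.
apply: functional_extensionality => w; apply: propositional_extensionality.
by split=> [|vw]; [apply: teq_trans (teq_sym uv) | apply: teq_trans uv vw].
Qed.

Lemma tclass_inj u v : tclass D u = tclass D v -> tequiv D u v.
Proof. by move=> /(congr1 sval) /= ->; apply: teq_refl. Qed.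

Lemma tequiv_count_mem u v x :
  tequiv D u v -> count_mem x u = count_mem x v.
Proof.
elim=> {u v} [//|u v _ -> //|u v w _ -> _ -> //|u u' v v' _ IHu _ IHv|y z _].
  by rewrite !count_cat IHu IHv.
by rewrite /= addnCA.
Qed.

Lemma tequiv_nseq_cat x y n m n' m' : x != y ->
  tequiv D (nseq n x ++ nseq m y) (nseq n' x ++ nseq m' y) -> n = n' /\ m = m'.
Proof.
move=> xy nm; have := tequiv_count_mem x nm; have := tequiv_count_mem y nm.
rewrite !count_cat !count_nseq /= !eqxx (negbTE xy) eq_sym (negbTE xy).
by rewrite !mul0n !mul1n !add0n !addn0 => -> ->.
Qed.

Section Independent.
Variables (x y : A).
Hypothesis xy : ~~ D x y.

Lemma tequiv_cons_nseq n : tequiv D (y :: nseq n x) (nseq n x ++ [:: y]).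
Proof.
elim: n => [|n IHn]; first exact: teq_refl.
apply: (@teq_trans _ _ _ (x :: y :: nseq n x)).
  exact: teq_cat (teq_sym (teq_swap xy)) (teq_refl _ _).
exact: (@teq_cat _ _ [:: x] [:: x]) (teq_refl _ _) IHn.
Qed.

Lemma tequiv_flatten_swap n :
  tequiv D (flatten (nseq n [:: x; y])) (nseq n x ++ nseq n y).
Proof.
elim: n => [|n IHn]; first exact: teq_refl.
apply: (@teq_cat _ _ [:: x] [:: x]); first exact: teq_refl.
apply: teq_trans (@teq_cat _ _ [:: y] [:: y] _ _ (teq_refl _ _) IHn) _.
by have := teq_cat (tequiv_cons_nseq n) (teq_refl _ (nseq n y)); rewrite -catA.
Qed.

End Independent.

Definition trace_lang_of (L : seq A -> Prop) : trace D -> Prop :=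
  fun t => exists u, L u /\ t = tclass D u.

Definition trace_rel_of (R : seq A -> seq A -> Prop) :
    trace D -> trace D -> Prop := fun s t =>
  exists u v, [/\ R u v, s = tclass D u & t = tclass D v].

Lemma trace_rational_of (L : seq A -> Prop) :
  regular L -> trace_rational (trace_lang_of L).
Proof. by exists L. Qed.

Lemma lc_rational_of (R : seq A -> seq A -> Prop) :
  rational_rel R -> left_closed D R -> lc_rational (trace_rel_of R).
Proof. by exists R. Qed.

Section Clique.
Variable P : pred A.
Hypothesis cliqueP : forall x y, P x -> P y -> D x y.

Lemma tequiv_clique u v :
  tequiv D u v -> (all P u -> u = v) /\ (all P v -> u = v).
Proof.
elim=> {u v} [//|u v _ [uv vu]|u v w _ [uv vu] _ [vw wv]|
              u u' v v' _ [uu' u'u] _ [vv' v'v]|x y Dxy].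
- by split=> [/vu|/uv] ->.
- split=> [Pu|Pw].
    have Euv := uv Pu; have Pv : all P v by rewrite -Euv.
    by rewrite Euv (vw Pv).
  have Evw := wv Pw; have Pv : all P v by rewrite Evw.
  by rewrite (vu Pv) Evw.
- split=> /[!all_cat] /andP[Pu Pv]; first by rewrite (uu' Pu) (vv' Pv).
  by rewrite (u'u Pu) (v'v Pv).
- have nPxy : ~ (P x /\ P y) by move=> [Px Py]; move: Dxy; rewrite cliqueP.
  by split=> /and3P[Px Py _]; case: nPxy.
Qed.

Lemma tclass_clique u v : all P u -> tclass D v = tclass D u -> v = u.
Proof. by move=> Pu /tclass_inj/tequiv_clique[_ ->]. Qed.

Lemma rational_clique_recognizable (K : trace D -> Prop) :
  (forall t, K t -> exists u, all P u /\ t = tclass D u) ->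
  trace_rational K -> trace_recognizable K.
Proof.
move=> cliqueK [L [regL KL]]; apply: regular_ext regL => u; split.
  by move=> Lu; apply/KL; exists u.
move=> Ku; have [w [Pw Euw]] := cliqueK _ Ku.
have Pu : all P u by rewrite (tclass_clique Pw Euw).
have [u' [Lu' /esym Eu'u]] := (KL _).1 Ku.
by rewrite -(tclass_clique Pu Eu'u).
Qed.

End Clique.

End Traces.

Section Counterexample.
Variables (A : finType) (D : rel A) (a b c d : A).
Hypotheses (reflD : reflexive D) (symD : symmetric D).
Hypotheses (ab : a != b) (Dab : D a b) (ncd : ~~ D c d).

Definition a_star (u : seq A) : Prop := exists n, u = nseq n a.

Definition cd_star (u : seq A) : Prop :=
  exists n, u = flatten (nseq n [:: c; d]).

Definition ab_cd_rel (u v : seq A) : Prop :=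
  (exists n, u = nseq n a /\ v = flatten (nseq n [:: c; d])) \/
  (exists n m, u = b :: nseq n a ++ nseq m b /\ v = nseq n c ++ nseq m d).

Definition R : trace D -> trace D -> Prop := trace_rel_of ab_cd_rel.
Definition K : trace D -> Prop := trace_lang_of cd_star.
Definition L : trace D -> Prop := trace_lang_of a_star.

Lemma clique_ab x y : pred2 a b x -> pred2 a b y -> D x y.
Proof.
by move=> /pred2P[]-> /pred2P[]->; rewrite ?reflD ?Dab // symD.
Qed.

Lemma cd_neq : c != d.
Proof. by apply: contraNneq ncd => ->. Qed.

Lemma all_ab_nseq_a n : all (pred2 a b) (nseq n a).
Proof. by rewrite all_nseq /= eqxx orbT. Qed.

Lemma all_ab_b_nseq_ab n m : all (pred2 a b) (b :: nseq n a ++ nseq m b).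
Proof. by rewrite /= all_cat all_ab_nseq_a !all_nseq /= !eqxx !orbT. Qed.

Lemma b_cons_neq_nseq_a w k : b :: w <> nseq k a.
Proof. by case: k => // k [Eba]; move: ab; rewrite Eba eqxx. Qed.

Lemma ab_cd_rel_clique u v : ab_cd_rel u v -> all (pred2 a b) u.
Proof.
by case=> [[n [-> _]]|[n [m [-> _]]]]; rewrite ?all_ab_nseq_a ?all_ab_b_nseq_ab.
Qed.

Lemma ab_cd_rel_rational : rational_rel ab_cd_rel.
Proof.
exists (RUnion (RStar (RSing [:: a] [:: c; d]))
          (RCat (RSing [:: b] [::])
             (RCat (RStar (RSing [:: a] [:: c])) (RStar (RSing [:: b] [:: d]))))).
move=> u v /=; split.
- case=> [[n [-> ->]]|[n [m [-> ->]]]].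
    by left; apply/rsem_star_sing; exists n; rewrite flatten_nseq1.
  right; exists [:: b], (nseq n a ++ nseq m b), [::], (nseq n c ++ nseq m d).
  split=> //; exists (nseq n a), (nseq m b), (nseq n c), (nseq m d).
  split=> //; apply/rsem_star_sing.
    by exists n; rewrite !flatten_nseq1.
  by exists m; rewrite !flatten_nseq1.
- case=> [/rsem_star_sing[n [-> ->]]|[x1 [x2 [y1 [y2 [[-> ->] rest -> ->]]]]]].
    by left; exists n; rewrite flatten_nseq1.
  case: rest => x3 [x4 [y3 [y4 [/rsem_star_sing[n [-> ->]] rest -> ->]]]].
  case/rsem_star_sing: rest => m [-> ->].
  by right; exists n, m; rewrite !flatten_nseq1.
Qed.

Lemma ab_cd_rel_left_closed : left_closed D ab_cd_rel.
Proof.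
move=> u u' v' uu' Ru'v'; exists v'; split; last exact: teq_refl.
have [_ -> //] := tequiv_clique clique_ab uu'.
exact: ab_cd_rel_clique Ru'v'.
Qed.

(* [Some true]: a c is expected next; [Some false]: a d; [None]: reject. *)
Definition cd_step (q : option bool) (x : A) : option bool :=
  match q with
  | Some true => if x == c then Some false else None
  | Some false => if x == d then Some true else None
  | None => None
  end.

Lemma cd_step_accepts w q : foldl cd_step q w = Some true ->
  (q = Some true -> cd_star w) /\ (q = Some false -> cd_star (c :: w)).
Proof.
have sink w' : foldl cd_step None w' = None by elim: w'.
elim: w q => [|x w IHw] q /=; first by move=> ->; split=> // _; exists 0.
move=> acc; split=> Eq; rewrite Eq /= in acc.
  by case: eqP acc => [-> /IHw[_ /(_ erefl)] | _]; rewrite ?sink.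
case: eqP acc => [-> /IHw[/(_ erefl)[n ->] _] | _]; last by rewrite sink.
by exists n.+1.
Qed.

Lemma cd_star_regular : regular cd_star.
Proof.
exists (option bool : finType), (Some true), cd_step.
exists (pred1 (Some true)) => w /=.
split=> [[n ->]|/eqP/cd_step_accepts[/(_ erefl) //]].
by apply/eqP; elim: n => //= n IHn; rewrite eqxx /= eqxx.
Qed.

Lemma L_recognizable : trace_recognizable L.
Proof.
apply: (rational_clique_recognizable clique_ab).
  by move=> _ [_ [[n ->] ->]]; exists (nseq n a); rewrite all_ab_nseq_a.
apply: trace_rational_of; apply: regular_ext (regular_all (pred1 a)) => u.
by split=> [/all_pred1P ->|[n ->]]; [exists (size u) | apply: all_pred1_nseq].
Qed.

Lemma tclass_cd_power n :
  tclass D (flatten (nseq n [:: c; d])) = tclass D (nseq n c ++ nseq n d).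
Proof. exact/tclass_eq/tequiv_flatten_swap. Qed.

Lemma rel_image_L_R t :
  rel_image L R t <-> exists n, t = tclass D (nseq n c ++ nseq n d).
Proof.
split=> [[_ [[_ [[k ->] ->]] [u [v [Ruv /esym Euk ->]]]]]|[n ->]].
  case: Ruv Euk => [[n [-> ->]] _|[n [m [-> _]]]].
    by exists n; apply: tclass_cd_power.
  by move=> /(tclass_clique clique_ab (all_ab_nseq_a k))/b_cons_neq_nseq_a.
exists (tclass D (nseq n a)).
split; first by exists (nseq n a); split=> //; exists n.
exists (nseq n a), (flatten (nseq n [:: c; d])).
by split=> //; [left; exists n | rewrite tclass_cd_power].
Qed.

Lemma rel_preimage_R_K t : rel_preimage R K t <-> exists n,
  t = tclass D (nseq n a) \/ t = tclass D (b :: nseq n a ++ nseq n b).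
Proof.
split=> [[_ [[_ [[k ->] ->]] [u [v [Ruv -> Evk]]]]]|[n Etn]].
  case: Ruv Evk => [[n [-> _]] _|[n [m [-> ->]]]]; first by exists n; left.
  rewrite tclass_cd_power => /tclass_inj/(tequiv_nseq_cat cd_neq)[-> ->].
  by eexists; right.
pose w := flatten (nseq n [:: c; d]).
exists (tclass D w); split; first by exists w; split=> //; exists n.
case: Etn => ->; first by exists (nseq n a), w; split=> //; left; exists n.
exists (b :: nseq n a ++ nseq n b), (nseq n c ++ nseq n d).
by split=> //; [right; exists n, n | rewrite tclass_cd_power].
Qed.

Lemma rel_image_L_R_not_recognizable : ~ trace_recognizable (rel_image L R).
Proof.
move=> recI.
have [|m [n [mn]]] := regular_collision (p := fun n => nseq n c)
    (s := fun n => nseq n d) recI.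
  by move=> n; apply/rel_image_L_R; exists n.
case/rel_image_L_R => k /tclass_inj/(tequiv_nseq_cat cd_neq)[Emk Enk].
by rewrite Emk Enk eqxx in mn.
Qed.

Lemma rel_preimage_R_K_not_rational : ~ trace_rational (rel_preimage R K).
Proof.
have clique_pre t :
    rel_preimage R K t -> exists u, all (pred2 a b) u /\ t = tclass D u.
  by move=> [_ [_ [u [v [/ab_cd_rel_clique Pu -> _]]]]]; exists u.
move=> /(rational_clique_recognizable clique_ab clique_pre) recP.
have [|m [n [mn]]] := regular_collision (p := fun n => b :: nseq n a)
    (s := fun n => nseq n b) recP.
  by move=> n; apply/rel_preimage_R_K; exists n; right.
case/rel_preimage_R_K => k [].
  by move=> /(tclass_clique clique_ab (all_ab_nseq_a k))/b_cons_neq_nseq_a.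
move=> /(tclass_clique clique_ab (all_ab_b_nseq_ab k k)) [Emnk].
have /(tequiv_nseq_cat ab)[Emk Enk] :
    tequiv D (nseq m a ++ nseq n b) (nseq k a ++ nseq k b).
  by rewrite Emnk; apply: teq_refl.
by rewrite Emk Enk eqxx in mn.
Qed.

End Counterexample.

Theorem lemma4p17 (A : finType) (D : rel A) :
  reflexive D -> symmetric D ->
  forall a b c d : A, a != b -> D a b -> ~~ D c d ->
  exists (R : trace D -> trace D -> Prop) (K L : trace D -> Prop),
    [/\ lc_rational R, trace_rational K, trace_recognizable L,
        ~ trace_rational (rel_preimage R K)
      & ~ trace_recognizable (rel_image L R)].
Proof.
move=> reflD symD a b c d ab Dab ncd.
exists (R a b c d), (K c d), (L a); split.
- apply: lc_rational_of; first exact: ab_cd_rel_rational.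
  exact: ab_cd_rel_left_closed reflD symD Dab.
- exact: trace_rational_of (cd_star_regular c d).
- exact: L_recognizable reflD symD Dab.
- exact: rel_preimage_R_K_not_rational reflD symD ab Dab ncd.
- exact: rel_image_L_R_not_recognizable reflD symD ab Dab ncd.
Qed.
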